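(* Let $p$ be an odd prime, let $l>2$ be an integer with $l\mid p-1$, and let $\omega$ be a primitive $l$-th root of unity in $\mathbb{F}_p$. For $(r_1,r_2,r_3)\in\{(1,0,3),(0,3,1),(0,1,3)\}$ let $\mathcal{C}_{(r_1,r_2,r_3)}$ be the cyclic code over $\mathbb{F}_p$ generated by $(x-1)^{r_1}(x+1)^{r_2}(x-\omega)^{r_3}$, of length $lp$ when $r_2=0$, and of length $lp$ if $l$ is even, $2lp$ if $l$ is odd, when $r_2\neq 0$. For $(r_1,r_2,r_3)\in\{(0,3,1),(0,1,3)\}$ assume additionally that $l$ is odd or $l\equiv 0\pmod 4$. Then $\mathcal{C}_{(r_1,r_2,r_3)}$ is an MDS symbol-pair code with minimum symbol-pair distance $d_p=6$.
   Context: For $\mathbf{x}=(x_0,\dots,x_{n-1})\in\mathbb{F}_p^n$, the symbol-pair weight is $\omega_p(\mathbf{x})=|\{i:(x_i,x_{i+1})\neq(0,0)\}|$ (indices modulo $n$), and the symbol-pair distance is $D_p(\mathbf{x},\mathbf{y})=|\{i:(x_i,x_{i+1})\neq(y_i,y_{i+1})\}|$. The minimum symbol-pair distance is the minimum of $D_p$ over distinct codewords. A code of length $n$ with minimum symbol-pair distance $d_p$ is an MDS symbol-pair code if $|\mathcal{C}|=p^{n-d_p+2}$. The cyclic code generated by $g(x)\mid x^n-1$ is the ideal $\langle g(x)\rangle$ in $\mathbb{F}_p[x]/\langle x^n-1\rangle$. *)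

From HB Require Import structures.
From mathcomp Require Import all_boot all_order all_algebra.
From mathcomp Require Import boolp.
Set Implicit Arguments. Unset Strict Implicit. Unset Printing Implicit Defensive.
Import GRing.Theory.
Local Open Scope ring_scope.

(* Words of length n over a finite field F are row vectors 'rV[F]_n,
   coordinates x_0,...,x_{n-1}; index i+1 is taken modulo n via ordS. *)

Definition pair_dist (F : finFieldType) (n : nat) (x y : 'rV[F]_n) : nat :=
  #|[set i : 'I_n | (x 0 i, x 0 (ordS i)) != (y 0 i, y 0 (ordS i))]|.

Definition pair_weight (F : finFieldType) (n : nat) (x : 'rV[F]_n) : nat :=
  #|[set i : 'I_n | (x 0 i, x 0 (ordS i)) != (0, 0)]|.

(* The cyclic code generated by g: the ideal <g(x)> of F[x]/<x^n - 1>,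
   a word c being identified with c_0 + c_1 x + ... + c_{n-1} x^{n-1}. *)
Definition cyclic_code (F : finFieldType) (n : nat) (g : {poly F})
  : {set 'rV[F]_n} :=
  [set c : 'rV[F]_n |
     `[< exists q : {poly F}, rVpoly c = (q * g) %% ('X^n - 1) >] ].

Definition min_pair_dist (F : finFieldType) (n : nat) (C : {set 'rV[F]_n})
  (d : nat) : Prop :=
  (exists2 x, x \in C & exists2 y, y \in C & x != y /\ pair_dist x y = d) /\
  (forall x y, x \in C -> y \in C -> x != y -> (d <= pair_dist x y)%N).

Definition MDS_pair_code (F : finFieldType) (n : nat) (C : {set 'rV[F]_n})
  (d : nat) : Prop :=
  min_pair_dist C d /\ #|C| = (#|F| ^ (n - d + 2))%N.

Definition gen_poly (F : finFieldType) (w : F) (r1 r2 r3 : nat) : {poly F} :=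
  ('X - 1) ^+ r1 * ('X + 1) ^+ r2 * ('X - w%:P) ^+ r3.

Definition code_len (p l r2 : nat) : nat :=
  if r2 == 0%N then (l * p)%N else if odd l then (2 * l * p)%N else (l * p)%N.

(* Let g = (x - u)(x - v)^3, where u/v is a primitive m-th root of unity in a
   field of characteristic p >= 3, and let n = m p.  Then g divides
   x^n - 1 = (x^m - 1)^p, the code <g> has p^(n-4) words, and g itself has
   pair weight 6, so it remains to see that every nonzero codeword c has pair
   weight at least 6.  The pair weight of c is its Hamming weight plus the
   number of zeros c_i followed by a nonzero c_(i+1).  Rotate c so that
   c_0 <> 0 = c_(n-1): it becomes a multiple f of g of degree d < n - 1.  The
   double root v rules out f = a + b x^k (it forces (u/v)^k = 1 and p | k, hence
   n | k), the triple root v rules out f = a + b x + c x^k (f, f' and f'' cannot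
   all vanish at v), hence also f = a + b x^e + c x^(e+1) after multiplication
   by x^(n-e) modulo x^n - 1; in all remaining shapes of f the zeros in front of
   its blocks of nonzero coefficients supply the missing weight.  The three
   codes of the theorem are the cases (u, v) = (1, w), (w, -1), (-1, w). *)

From HB Require Import structures.
From mathcomp Require Import all_boot all_order all_algebra.
From mathcomp Require Import zify ring.
From mathcomp Require Import boolp.
Set Implicit Arguments. Unset Strict Implicit. Unset Printing Implicit Defensive.
Import GRing.Theory.
Local Open Scope ring_scope.

Lemma uniq_leq_card (T : finType) (A : {set T}) (s : seq T) :
  uniq s -> {subset s <= A} -> (size s <= #|A|)%N.
Proof. by move=> us sA; rewrite cardE uniq_leq_size // => x /sA; rewrite mem_enum. Qed.

Lemma exists_rise (P : pred nat) i d :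
  ~~ P i -> P d -> (i < d)%N -> exists2 j, (j < d)%N & ~~ P j && P j.+1.
Proof.
move=> Pi Pd; elim: d Pd => // d IH Pd; rewrite ltnS leq_eqVlt.
have [Pd'|nPd] := boolP (P d); last by exists d; rewrite ?nPd.
case/predU1P => [id_ | /(IH Pd') [j jd Pj]]; first by rewrite id_ Pd' in Pi.
by exists j => //; apply: ltnW.
Qed.

Lemma poly_def_support (R : nzRingType) (f : {poly R}) (s : seq nat) :
  uniq s -> (forall i, f`_i != 0 -> i \in s) -> f = \sum_(i <- s) f`_i *: 'X^i.
Proof.
move=> us fs; apply/polyP => j; rewrite coef_sum.
under eq_bigr do rewrite coefZ coefXn mulr_natr mulrb.
have [js | jNs] := boolP (j \in s).
  rewrite (bigD1_seq j) //= eqxx big1 ?addr0 // => i; rewrite eq_sym.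
  by move/negbTE ->.
rewrite big1_seq => [|i /andP [_ si]]; last by case: eqP => // ji; rewrite ji si in jNs.
by apply/eqP; apply: contraR jNs => /fs.
Qed.

Section SparseMultiples.
Variable F : fieldType.
Implicit Types (f : {poly F}) (a b c u v z : F).

Lemma dvdp_deriv_XsubC_exp z k f :
  ('X - z%:P) ^+ k.+1 %| f -> ('X - z%:P) ^+ k %| f^`().
Proof.
case/dvdpP => q ->; rewrite derivM deriv_exp derivXsubC mul1r.
by rewrite dvdp_add ?dvdp_mull ?dvdp_exp2l // -mulr_natr dvdp_mulr.
Qed.

Lemma root_dvdp_XsubC_exp z k f : ('X - z%:P) ^+ k.+1 %| f -> root f z.
Proof.
by rewrite -dvdp_XsubCl; apply: dvdp_trans; rewrite -{1}(expr1 ('X - _)) dvdp_exp2l.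
Qed.

Lemma XsubC_exp3_Ndvdp_trinomial z a b c m :
  z != 0 -> a != 0 -> b != 0 -> c != 0 -> (1 < m)%N ->
  ~~ (('X - z%:P) ^+ 3 %| a%:P + b *: 'X + c *: 'X^m).
Proof.
move=> z0 a0 b0 c0 m_gt1; apply/negP => dvd3.
set f := (X in _ %| X) in dvd3.
have df : f^`() = b%:P + c *: ('X^(m.-1) *+ m).
  by rewrite !derivD derivC derivZ derivX derivZ derivXn add0r alg_polyC.
have ddf : f^`()^`() = c *: ('X^(m.-2) *+ m.-1 *+ m).
  by rewrite df derivD derivC derivZ derivMn derivXn add0r.
have /eqP f_z : root f z := root_dvdp_XsubC_exp dvd3.
have /eqP df_z : root f^`() z := root_dvdp_XsubC_exp (dvdp_deriv_XsubC_exp dvd3).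
have /eqP ddf_z : root f^`()^`() z.
  exact: root_dvdp_XsubC_exp (dvdp_deriv_XsubC_exp (dvdp_deriv_XsubC_exp dvd3)).
move: f_z df_z ddf_z; rewrite ddf df /f !hornerE hornerMn hornerMn hornerMn !hornerXn.
rewrite -mulrnA -[_ *+ (_ * _)]mulr_natr -[_ *+ m]mulr_natr natrM.
(* f''(z) = 0 forces m (m - 1) = 0 in F: then f'(z) = b, or f(z) = a + z f'(z) = a. *)
move=> f_z df_z /eqP; rewrite !mulf_eq0 (negbTE c0) expf_eq0 (negbTE z0) andbF /=.
have zm : z * z ^+ m.-1 = z ^+ m by rewrite -exprS prednK // ltnW.
case/orP => [/eqP m1|/eqP m0]; last by move: df_z; rewrite m0 !mulr0 addr0 => /eqP; rewrite (negbTE b0).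
have m1' : m%:R = 1 :> F by rewrite -(prednK (ltnW m_gt1)) -addn1 natrD m1 add0r.
move: df_z; rewrite m1' mulr1 => bE; move/eqP: f_z.
by rewrite -zm mulrCA -addrA (mulrC b) -mulrDr addrC bE mulr0 add0r (negbTE a0).
Qed.

Lemma binomial_double_root u v a b m :
  ('X - u%:P) * ('X - v%:P) ^+ 2 %| a%:P + b *: 'X^m -> v != 0 -> b != 0 ->
  u ^+ m = v ^+ m /\ m%:R = 0 :> F.
Proof.
move=> dvd v0 b0.
have dvd_u : ('X - u%:P) ^+ 1 %| a%:P + b *: 'X^m.
  by rewrite expr1; apply: dvdp_trans dvd; apply: dvdp_mulr.
have dvd_v : ('X - v%:P) ^+ 2 %| a%:P + b *: 'X^m.
  by apply: dvdp_trans dvd; apply: dvdp_mull.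
have := root_dvdp_XsubC_exp (dvdp_deriv_XsubC_exp dvd_v).
have := root_dvdp_XsubC_exp dvd_v; have := root_dvdp_XsubC_exp dvd_u.
rewrite derivD derivC derivZ derivXn add0r /root !hornerE hornerMn hornerXn.
move=> /eqP ru /eqP rv; rewrite -mulr_natr !mulf_eq0 (negbTE b0) expf_eq0 (negbTE v0) andbF /=.
by move=> /eqP m0; split=> //; apply: (mulfI b0); apply: (addrI a); rewrite ru rv.
Qed.

End SparseMultiples.

Lemma coef_rVpoly_ge (R : nzSemiRingType) d (v : 'rV[R]_d) j :
  (d <= j)%N -> (rVpoly v)`_j = 0.
Proof. by move=> dj; rewrite coef_rVpoly insubF // ltnNge dj. Qed.

Section PairWeight.
Variables (F : finFieldType) (n : nat).
Implicit Types x y c : 'rV[F]_n.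

Definition nz_positions c := [set i : 'I_n | c 0 i != 0].
Definition front_zeros c := [set i : 'I_n | (c 0 i == 0) && (c 0 (ordS i) != 0)].

Lemma pair_weightE c : pair_weight c = (#|nz_positions c| + #|front_zeros c|)%N.
Proof.
rewrite -cardsUI.
have -> : nz_positions c :&: front_zeros c = set0.
  by apply/setP => i; rewrite !inE; case: eqP.
rewrite cards0 addn0; apply: eq_card => i.
by rewrite !inE xpair_eqE negb_and; case: eqP.
Qed.

Lemma pair_weight_full c : (forall i, c 0 i != 0) -> pair_weight c = n.
Proof.
move=> nz; rewrite -[RHS]card_ord; apply: eq_card => i.
by rewrite inE xpair_eqE negb_and nz.
Qed.

Lemma pair_dist_weight x y : pair_dist x y = pair_weight (x - y).
Proof. by apply: eq_card => i; rewrite !inE !xpair_eqE !mxE !subr_eq0. Qed.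

End PairWeight.

Section CyclicShift.
Variables (F : finFieldType) (n' : nat).
Local Notation n := n'.+2.
Implicit Types (c : 'rV[F]_n) (g : {poly F}).

Definition rot (k : 'I_n) c : 'rV[F]_n := \row_i c 0 (i + k).

Lemma ordS_add (i k : 'I_n) : ordS (i + k) = ordS i + k.
Proof. by rewrite -!(@add_Zp_1 n) addrAC. Qed.

Lemma ordS_max : ordS (ord_max : 'I_n) = 0.
Proof. by apply: val_inj; rewrite /= modnn. Qed.

Lemma pair_weight_rot k c : pair_weight (rot k c) = pair_weight c.
Proof.
rewrite /pair_weight -[RHS](card_preimset _ (addIr k)); apply: eq_card => i.
by rewrite !inE !mxE ordS_add.
Qed.

Lemma pair_weight_le_prefix c k :
  (forall i : 'I_n, (k <= i)%N -> c 0 i = 0) -> (pair_weight c <= k.+1)%N.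
Proof.
move=> ck; have lt_k i : c 0 i != 0 -> (i < k)%N by apply: contraR; rewrite -leqNgt => /ck ->.
rewrite -[k.+1]card_ord; apply: leq_trans (leq_imset_card (fun j : 'I_k.+1 => ord_pred (inord j : 'I_n)) _).
apply/subset_leq_card/subsetP => i; rewrite !inE xpair_eqE negb_and => nz.
have Si_le : (ordS i < k.+1)%N.
  by case/orP: nz => /lt_k; [apply: leq_trans (leq_mod _ _) | apply: ltnW].
by apply/imsetP; exists (inord (ordS i)); rewrite ?inE // inordK // inord_val ordSK.
Qed.

Lemma exists_front_zero c : c != 0 -> (exists i, c 0 i = 0) -> exists i, i \in front_zeros c.
Proof.
move=> c_nz [i0 ci0]; have [/eqP T0 | /set0Pn //] := boolP (front_zeros c == set0).
have step i : c 0 i = 0 -> c 0 (ordS i) = 0.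
  by move=> ci; have := in_set0 i; rewrite -T0 inE ci eqxx => /negbFE/eqP.
have c_shift m : c 0 (i0 + m%:R) = 0.
  by elim: m => [|m IH]; rewrite ?addr0 // mulrSr addrA (@add_Zp_1 n) step.
case/negP: c_nz; apply/eqP/rowP => i.
by rewrite !mxE -(subrK i0 i) addrC -[i - i0]natr_Zp c_shift.
Qed.

Lemma rot_natS m c : rot (m.+1)%:R c = rot 1 (rot m%:R c).
Proof. by apply/rowP => i; rewrite !mxE mulrS addrA. Qed.

Lemma rVpoly_rot1 c : rVpoly (rot 1 c) * 'X = rVpoly c + (c 0 0)%:P * ('X^n - 1).
Proof.
apply/polyP => [[|j]]; rewrite coefMX coefD coefCM coefB coefXn coef1 /=.
  by rewrite (coef_rVpoly_ord c 0) sub0r mulrN1 subrr.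
rewrite subr0; have [jn | nj] := ltnP j n; last first.
  by rewrite !coef_rVpoly_ge ?gtn_eqF ?mulr0 ?addr0 // ltnW.
rewrite (coef_rVpoly_ord _ (Ordinal jn)) mxE (@add_Zp_1 n).
have [lt | ge] := ltnP j.+1 n.
  rewrite ltn_eqF // mulr0 addr0 (coef_rVpoly_ord _ (Ordinal lt)); congr (c 0 _).
  by apply: val_inj; rewrite /= modn_small.
have jn1 : j.+1 = n by apply/eqP; rewrite eqn_leq jn ge.
rewrite jn1 eqxx mulr1 coef_rVpoly_ge // add0r; congr (c 0 _).
by apply: val_inj; rewrite /= jn1 modnn.
Qed.

Lemma cyclic_codeE g c : g %| 'X^n - 1 -> (c \in cyclic_code n g) = (g %| rVpoly c).
Proof.
move=> gX; rewrite inE; apply/asboolP/idP => [[q ->] | /dvdpP [q qE]].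
  by rewrite -(dvdp_mod _ gX) dvdp_mull.
exists q; rewrite -qE modp_small // size_XnsubC //.
exact: leq_ltn_trans (size_poly _ _) (ltnSn _).
Qed.

Lemma cyclic_code_rot g k c : g %| 'X^n - 1 ->
  c \in cyclic_code n g -> rot k c \in cyclic_code n g.
Proof.
move=> gX; rewrite !cyclic_codeE // -[k]natr_Zp.
have g_X_coprime : coprimep g 'X.
  rewrite -[X in coprimep _ X]subr0 -polyC0 coprimep_XsubC.
  by apply: contra (root_dvdp gX) _; rewrite /root !hornerE expr0n /= sub0r oppr_eq0 oner_eq0.
elim: (nat_of_ord k) => [|m IH] gc.
  by congr (_ %| rVpoly _): gc; apply/rowP => i; rewrite mxE addr0.
by rewrite rot_natS -(Gauss_dvdpl _ g_X_coprime) rVpoly_rot1 dvdp_add ?dvdp_mull ?IH.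
Qed.

Lemma cyclic_code_sub g x y : g %| 'X^n - 1 ->
  x \in cyclic_code n g -> y \in cyclic_code n g -> x - y \in cyclic_code n g.
Proof. by move=> gX; rewrite !cyclic_codeE // linearB; apply: dvdp_sub. Qed.

Lemma card_cyclic_code g : g %| 'X^n - 1 ->
  #|cyclic_code n g| = (#|F| ^ (n - (size g).-1))%N.
Proof.
move=> gX; set k := (n - (size g).-1)%N.
have sX : size ('X^n - 1 : {poly F}) = n.+1 by rewrite -polyC1 size_XnsubC.
have g0 : g != 0 by apply: contraTneq gX => ->; rewrite dvd0p -size_poly_eq0 sX.
have size_g : (size g <= n.+1)%N by rewrite -sX dvdp_leq // -size_poly_eq0 sX.
have size_qg (q : {poly F}) : (size q <= k)%N -> (size (q * g)%R <= n)%N.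
  move=> sq; apply: leq_trans (size_polyMleq _ _) _.
  rewrite -subn1 leq_subLR; apply: leq_trans (leq_add sq (leqnn _)) _.
  rewrite -size_poly_gt0 in g0; rewrite /k; lia.
pose h (u : 'rV[F]_k) : 'rV[F]_n := poly_rV (rVpoly u * g).
have h_inj : injective h.
  move=> u v /(congr1 rVpoly); rewrite !poly_rV_K ?size_qg ?size_poly // => /(mulIf g0).
  by move=> uv; rewrite -[u]rVpolyK uv rVpolyK.
have -> : cyclic_code n g = h @: [set: 'rV[F]_k].
  apply/setP => c; rewrite cyclic_codeE //; apply/idP/imsetP => [/dvdpP [q qE] | [u _ ->]].
    have sq : (size q <= k)%N.
      have [-> | q0] := eqVneq q 0; first by rewrite size_poly0.
      have : (size (rVpoly c) <= n)%N by exact: size_poly.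
      rewrite qE size_mul //.
      rewrite -size_poly_gt0 in g0; rewrite /k; move: (size q) (size g) g0 => a b; lia.
    by exists (poly_rV q); rewrite ?inE // /h poly_rV_K // -qE rVpolyK.
  by rewrite /h poly_rV_K ?size_qg ?size_poly // dvdp_mull.
by rewrite card_imset // cardsT card_mx mul1n.
Qed.

End CyclicShift.

Section PairWeightBound.
Variables (F : finFieldType) (n' : nat) (g : {poly F}).
Local Notation n := n'.+2.
Hypotheses (n_gt5 : (5 < n)%N) (size_g : size g = 5%N) (g_dvd : g %| 'X^n - 1).
Hypothesis g_Ndvd_binomial : forall (a b : F) m,
  a != 0 -> b != 0 -> (0 < m < n)%N -> ~~ (g %| a%:P + b *: 'X^m).
Hypothesis g_Ndvd_trinomial : forall (a b c : F) m,
  a != 0 -> b != 0 -> c != 0 -> (1 < m < n)%N -> ~~ (g %| a%:P + b *: 'X + c *: 'X^m).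

Lemma g_dvd_trinomial_shift (a b c : F) e : (e < n)%N ->
  g %| a%:P + b *: 'X^e + c *: 'X^(e.+1) -> g %| b%:P + c *: 'X + a *: 'X^(n - e).
Proof.
move=> en dvd; have := dvdp_sub (dvdp_mull 'X^(n - e) dvd) (dvdp_mull (b%:P + c *: 'X) g_dvd).
have XnE : 'X^n = 'X^(n - e) * 'X^e :> {poly F} by rewrite -exprD subnK // ltnW.
congr (_ %| _); rewrite -!mul_polyC XnE exprS.
move: 'X^(n - e) 'X^e => A B; ring.
Qed.

Section Normalized.
Variable c : 'rV[F]_n.
Hypotheses (g_dvd_c : g %| rVpoly c) (c0 : c 0 0 != 0) (c_last : c 0 ord_max = 0).
Local Notation f := (rVpoly c).
Local Notation S := (nz_positions c).
Local Notation T := (front_zeros c).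
Let d := (size f).-1.

Lemma coef_normalized_ge j : (n.-1 <= j)%N -> f`_j = 0.
Proof.
rewrite leq_eqVlt => /predU1P [<- | /coef_rVpoly_ge //].
by rewrite (coef_rVpoly_ord c ord_max).
Qed.

Lemma coef_normalized_lead : f`_d != 0.
Proof.
rewrite -lead_coefE lead_coef_eq0; apply: contraNneq c0 => f0.
by rewrite -(coef_rVpoly_ord c 0) f0 coef0.
Qed.

Lemma normalized_deg_bounds : (4 <= d < n.-1)%N.
Proof.
have f0 : f != 0 by rewrite -lead_coef_eq0 lead_coefE coef_normalized_lead.
have size_f : (5 <= size f)%N by rewrite -size_g dvdp_leq.
have : ~~ (n.-1 <= d)%N by apply: contra coef_normalized_lead => /coef_normalized_ge/eqP.
by rewrite -ltnNge => ->; rewrite andbT /d; move: (size f) size_f; case.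
Qed.

Lemma ord_max_front : ord_max \in T.
Proof. by rewrite inE ordS_max c_last eqxx. Qed.

Lemma front_zeros_inord j : (j.+1 < n)%N -> f`_j = 0 -> f`_j.+1 != 0 -> inord j \in T.
Proof.
move=> jn fj fj1; have jn' := ltnW jn.
rewrite inE -!coef_rVpoly_ord /= !inordK ?modn_small //.
by rewrite fj eqxx.
Qed.

Lemma mem_nz_positions (i : 'I_n) : (i \in S) = (f`_i != 0).
Proof. by rewrite inE coef_rVpoly_ord. Qed.

Lemma coef_normalized_support (s : seq 'I_n) :
  uniq s -> {subset s <= S} -> (#|S| <= size s)%N ->
  forall j, f`_j != 0 -> j \in [seq val i | i <- s].
Proof.
move=> us sS Ss j fj.
have jn : (j < n)%N.
  by rewrite ltnNge; apply: contra fj => nj; rewrite coef_rVpoly_ge.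
have sub : s \subset S by apply/subsetP.
have cardS : #|s| = #|S|.
  by apply/eqP; rewrite eqn_leq subset_leq_card // (card_uniqP us).
move/(subset_cardP cardS): sub => eqS.
by rewrite -[j]/(val (Ordinal jn)) map_f // eqS mem_nz_positions.
Qed.

Lemma coef_normalized_gt j : (d < j)%N -> f`_j = 0.
Proof. by move=> dj; apply: nth_default; move: dj; rewrite /d; case: (size f). Qed.

Lemma coef_normalized0 : f`_0 != 0.
Proof. by rewrite (coef_rVpoly_ord c 0). Qed.

Lemma inord_deg_neq0 : (inord d : 'I_n) != 0.
Proof.
have [d4 dn] := andP normalized_deg_bounds.
by rewrite -val_eqE /= inordK; [case: (d) d4 | apply: ltn_trans dn _].
Qed.

Lemma three_le_nz_positions : (3 <= #|S|)%N.
Proof.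
have [d4 dn] := andP normalized_deg_bounds.
rewrite leqNgt; apply/negP => S2.
have supp : forall j, f`_j != 0 -> j \in [:: 0%N; d].
  have := @coef_normalized_support [:: 0; inord d].
  rewrite /= inordK; last exact: ltn_trans dn _.
  apply; first by rewrite /= inE eq_sym inord_deg_neq0.
    move=> i; rewrite !inE => /predU1P [-> | /eqP ->] //.
    by rewrite -coef_rVpoly_ord inordK ?coef_normalized_lead //; apply: ltn_trans dn _.
  exact: S2.
have fE : f = (f`_0)%:P + f`_d *: 'X^d.
  rewrite {1}(poly_def_support _ supp) /= ?inE; last by case: (d) d4.
  by rewrite !big_cons big_nil addr0 expr0 alg_polyC.
have d_range : (0 < d < n)%N by rewrite (ltn_trans _ d4) //= (ltn_trans dn).
apply: negP (g_Ndvd_binomial coef_normalized0 coef_normalized_lead d_range) _.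
by rewrite -fE.
Qed.

Lemma normalized_support3 : #|S| = 3 ->
  exists e, [/\ (0 < e < d)%N, f`_e != 0 & forall j, f`_j != 0 -> j \in [:: 0%N; e; d]].
Proof.
have [d4 dn] := andP normalized_deg_bounds; have d_lt_n := ltn_trans dn (ltnSn _).
move=> S3; have [oe oeS] : exists2 oe, oe \in S & oe \notin [set 0; inord d].
  by apply/subsetPn/negP => /subset_leq_card; rewrite cards2 S3 eq_sym inord_deg_neq0.
have fe : f`_oe != 0 by rewrite mem_nz_positions in oeS.
rewrite !inE -!val_eqE /= inordK // => /norP [e0 ed].
have e_le_d : (oe <= d)%N by rewrite leqNgt; apply: contra fe => /coef_normalized_gt ->.
exists oe; split; rewrite ?lt0n ?e0 ?ltn_neqAle ?ed //.
have := @coef_normalized_support [:: 0; oe; inord d]; rewrite /= inordK //; apply.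
- by rewrite !inE -!val_eqE /= inordK // negb_or eq_sym e0 eq_sym ed; case: (d) d4.
- move=> i; rewrite !inE => /or3P [] /eqP -> //; first by rewrite -coef_rVpoly_ord.
  by rewrite -coef_rVpoly_ord inordK ?coef_normalized_lead.
- by rewrite S3.
Qed.

Lemma three_le_front_zeros : #|S| = 3 -> (3 <= #|T|)%N.
Proof.
move=> /normalized_support3 [e [/andP [e0 ed] fe supp]].
have [d4 dn] := andP normalized_deg_bounds.
have fE : f = (f`_0)%:P + f`_e *: 'X^e + f`_d *: 'X^d.
  rewrite {1}(poly_def_support _ supp) /= ?inE.
    by rewrite !big_cons big_nil addr0 expr0 alg_polyC addrA.
  by lia.
have [e1 | e1] := eqVneq e 1%N.
  have d_range : (1 < d < n)%N by lia.
  case/negP: (g_Ndvd_trinomial coef_normalized0 fe coef_normalized_lead d_range).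
  by move: g_dvd_c; rewrite {1}fE e1 expr1.
have [de | de] := eqVneq d e.+1.
  have m_range : (1 < n - e < n)%N by lia.
  case/negP: (g_Ndvd_trinomial fe coef_normalized_lead coef_normalized0 m_range).
  apply: g_dvd_trinomial_shift; first by lia.
  by move: g_dvd_c; rewrite {1}fE de.
have f_pred j : j \in [:: e; d] -> f`_j.-1 = 0.
  move=> jin; apply/eqP/negPn/negP => /supp; move: jin; rewrite !inE; lia.
have e_pred : e.-1.+1 = e by rewrite prednK.
have d_pred : d.-1.+1 = d by rewrite prednK // (ltn_trans e0).
apply: leq_trans (uniq_leq_card (s := [:: ord_max; inord e.-1; inord d.-1]) _ _) => //.
  by rewrite /= !inE -!val_eqE /= !inordK; lia.
move=> i; rewrite !in_cons in_nil orbF => /or3P [] /eqP ->; first exact: ord_max_front.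
  apply: front_zeros_inord; first by rewrite e_pred; lia.
    by apply: f_pred; rewrite !inE eqxx.
  by rewrite e_pred.
apply: front_zeros_inord; first by rewrite d_pred; lia.
  by apply: f_pred; rewrite !inE eqxx orbT.
by rewrite d_pred coef_normalized_lead.
Qed.

Lemma deg_lt_card_nz_positions : (forall j, (j < d)%N -> f`_j != 0) -> (d < #|S|)%N.
Proof.
have [_ dn] := andP normalized_deg_bounds; have d_lt_n := ltn_trans dn (ltnSn _).
move=> nz; rewrite -(size_iota 0 d.+1) -(size_map (fun j => inord j : 'I_n)).
apply: uniq_leq_card.
  rewrite map_inj_in_uniq ?iota_uniq // => i k; rewrite !mem_iota !add0n => ilt klt.
  by move/(congr1 (@nat_of_ord _)); rewrite !inordK ?(leq_trans ilt d_lt_n) ?(leq_trans klt d_lt_n).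
move=> x /mapP [i]; rewrite mem_iota ltnS => /andP [_ id] ->.
rewrite mem_nz_positions inordK ?(leq_ltn_trans id) //.
by move: id; rewrite leq_eqVlt => /predU1P [-> | /nz //]; exact: coef_normalized_lead.
Qed.

Lemma two_le_front_zeros : (#|S| <= d)%N -> (2 <= #|T|)%N.
Proof.
have [_ dn] := andP normalized_deg_bounds.
move=> Sd; have /existsP [j /eqP fj] : [exists j : 'I_d, f`_j == 0].
  apply: contraLR Sd; rewrite negb_exists -ltnNge => /forallP nz.
  by apply: deg_lt_card_nz_positions => j jd; apply: nz (Ordinal jd).
have nz_j : ~~ (f`_j != 0) by rewrite negbK fj.
have [k kd /andP [/negPn/eqP fk fk1]] :=
  exists_rise (P := fun j => f`_j != 0) nz_j coef_normalized_lead (ltn_ord j).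
apply: leq_trans (uniq_leq_card (s := [:: ord_max; inord k]) _ _) => //.
  by rewrite /= inE -val_eqE /= inordK; lia.
move=> i; rewrite !in_cons in_nil orbF => /orP [] /eqP ->; first exact: ord_max_front.
by apply: front_zeros_inord => //; lia.
Qed.

Lemma pair_weight_normalized : (6 <= pair_weight c)%N.
Proof.
have [d4 _] := andP normalized_deg_bounds.
have T1 : (1 <= #|T|)%N by rewrite card_gt0; apply/set0Pn; exists ord_max; exact: ord_max_front.
have S3 := three_le_nz_positions.
rewrite pair_weightE; case: (leqP 5 #|S|) => S5; first by lia.
have T2 := two_le_front_zeros (@leq_trans 4 _ _ S5 d4).
case: (leqP 4 #|S|) => S4; first by lia.
have T3 : (3 <= #|T|)%N by apply: three_le_front_zeros; lia.
by lia.
Qed.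

End Normalized.

Lemma pair_weight_codeword c : c \in cyclic_code n g -> c != 0 -> (6 <= pair_weight c)%N.
Proof.
move=> cC c_nz; have [/forallP nz | ] := boolP [forall i, c 0 i != 0].
  by rewrite pair_weight_full.
rewrite negb_forall => /existsP [i0 /negPn/eqP ci0].
have [j] := exists_front_zero c_nz (ex_intro _ i0 ci0); rewrite inE => /andP [/eqP cj cj1].
rewrite -(pair_weight_rot (ordS j)); apply: pair_weight_normalized.
- by rewrite -cyclic_codeE // cyclic_code_rot.
- by rewrite mxE add0r.
- by rewrite mxE -(@add_Zp_1 n) addrCA (@add_Zp_1 n) ordS_max addr0.
Qed.

Lemma MDS_pair_code_6 : MDS_pair_code (cyclic_code n g) 6.
Proof.
have size_g_n : (size g <= n)%N by rewrite size_g ltnW.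
have gC : poly_rV g \in cyclic_code n g by rewrite cyclic_codeE // poly_rV_K.
have g_nz : poly_rV g != 0 :> 'rV[F]_n.
  by apply: contra_eq_neq size_g => /(congr1 rVpoly); rewrite poly_rV_K // linear0 => ->; rewrite size_poly0.
split; [split|].
- exists (poly_rV g) => //; exists 0; rewrite ?cyclic_codeE ?linear0 ?dvdp0 //; split=> //.
  apply/eqP; rewrite pair_dist_weight subr0 eqn_leq pair_weight_codeword // andbT.
  by apply: pair_weight_le_prefix => i i5; rewrite mxE nth_default // size_g.
- move=> x y xC yC xy; rewrite pair_dist_weight pair_weight_codeword ?cyclic_code_sub //.
  by rewrite subr_eq0.
- by rewrite card_cyclic_code // size_g; congr (_ ^ _)%N; lia.
Qed.

End PairWeightBound.

Lemma Xn_sub1_pchar (F : fieldType) p m : p \in [pchar F] ->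
  ('X^m - 1) ^+ p = 'X^(m * p) - 1 :> {poly F}.
Proof.
move=> chp; have chP : p \in [pchar {poly F}] by rewrite pchar_poly.
rewrite -(pFrobenius_autE chP) pFrobenius_autB_comm; last exact: commr1.
by rewrite !pFrobenius_autE expr1n -exprM.
Qed.

Lemma XsubC_exp_dvdp_Xn_sub1 (F : fieldType) p m (u v : F) :
  p \in [pchar F] -> u ^+ m = 1 -> v ^+ m = 1 -> u != v ->
  ('X - u%:P) ^+ p * ('X - v%:P) ^+ p %| 'X^(m * p) - 1.
Proof.
move=> chp um vm uv; rewrite -Xn_sub1_pchar // -exprMn; apply: dvdp_exp2r.
rewrite Gauss_dvdp ?coprimep_XsubC ?root_XsubC 1?eq_sym //.
by rewrite !dvdp_XsubCl /root !hornerE um vm subrr eqxx.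
Qed.

Section PrimitiveRoots.
Variable F : fieldType.
Implicit Types z : F.

Lemma prim_root_dvdP n z : (0 < n)%N ->
  (forall k, (z ^+ k == 1) = (n %| k)%N) -> n.-primitive_root z.
Proof.
move=> n0 zk; rewrite /primitive_root_of_unity n0; apply/forallP => i.
rewrite unity_rootE zk; have [-> | ne] := eqVneq i.+1 n; first by rewrite dvdnn.
rewrite eqbF_neg; apply: contra ne => /(dvdn_leq (ltn0Sn _)) le.
by rewrite eqn_leq le ltn_ord.
Qed.

Lemma prim_rootV n z : n.-primitive_root z -> n.-primitive_root z^-1.
Proof.
move=> pz; apply: prim_root_dvdP (prim_order_gt0 pz) _ => k.
by rewrite exprVn invr_eq1 (prim_order_dvd pz).
Qed.

Lemma prim_root_opp l z : (-1 : F) != 1 -> odd l || (4 %| l)%N ->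
  l.-primitive_root z -> (if odd l then 2 * l else l)%N.-primitive_root (- z).
Proof.
move=> N1 l_cond pz; set m := (if odd l then _ else _)%N.
have m_even : ~~ odd m by rewrite /m; case: ifP => [_ | /negbT //]; rewrite oddM.
have l0 := prim_order_gt0 pz.
apply: prim_root_dvdP => [|k]; first by rewrite /m; case: odd; rewrite ?muln_gt0.
rewrite exprNn -signr_odd; have [ko | ke] := boolP (odd k); last first.
  rewrite expr0 mul1r -(prim_order_dvd pz) /m.
  by case: ifP => // lo; rewrite Gauss_dvd ?coprime2n ?lo // dvdn2 ke.
rewrite expr1 mulN1r eqr_oppLR.
have -> : (m %| k)%N = false.
  by apply: contraTF ko => mk; rewrite -dvdn2 (dvdn_trans _ mk) // dvdn2.
apply/negbTE/eqP => zk.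
have : (l %| k * 2)%N by rewrite (prim_order_dvd pz) exprM zk sqrrN expr1n.
case/orP: l_cond => [lo | l4].
  by rewrite Gauss_dvdl ?coprimen2 // (prim_order_dvd pz) zk (negbTE N1).
move/(dvdn_trans l4); rewrite -[4%N]/(2 * 2)%N dvdn_pmul2r // dvdn2.
by rewrite ko.
Qed.

End PrimitiveRoots.

Lemma MDS_pair_code_XsubC_XsubC3 (F : finFieldType) (p m : nat) (u v : F) :
  p \in [pchar F] -> (2 < p)%N -> (1 < m)%N -> u ^+ m = 1 -> m.-primitive_root (u / v) ->
  MDS_pair_code (cyclic_code (m * p) (('X - u%:P) * ('X - v%:P) ^+ 3)) 6.
Proof.
move=> chp p2 m1 um pr; have pp := pcharf_prime chp.
have v0 : v != 0.
  apply: contraTneq pr => ->; rewrite invr0 mulr0; apply/negP.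
  by move/prim_root_eq0; rewrite eqxx => /esym/eqP m0; rewrite m0 in m1.
have uv : u != v.
  apply: contraTneq pr => ->; rewrite divff //; apply/negP.
  by move/prim_order_dvd/(_ 1%N); rewrite expr1n eqxx dvdn1 => /eqP m_1; rewrite m_1 in m1.
have vm : v ^+ m = 1.
  by have := prim_expr_order pr; rewrite exprMn exprVn um mul1r => /eqP; rewrite invr_eq1 => /eqP.
have cop : coprime m p.
  by rewrite coprime_sym prime_coprime //; apply/negP => /(prim_root_pcharF pr); rewrite chp.
have [n' nE] : exists n', (m * p)%N = n'.+2 by exists (m * p).-2; move: m1 p2; clear; nia.
rewrite nE; apply: MDS_pair_code_6.
- by rewrite -nE; move: m1 p2; clear; nia.
- by rewrite size_mul ?size_XsubC ?size_exp_XsubC ?expf_neq0 ?polyXsubC_eq0.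
- rewrite -nE; apply: dvdp_trans (XsubC_exp_dvdp_Xn_sub1 chp um vm uv).
  apply: dvdp_mul; last exact: dvdp_exp2l.
  by rewrite -{1}(expr1 ('X - u%:P)) dvdp_exp2l // (ltnW (ltnW p2)).
- move=> a b k a0 b0 /andP [k0 kn]; apply/negP => dvd.
  have [uvk k_char] : u ^+ k = v ^+ k /\ k%:R = 0 :> F.
    apply: binomial_double_root v0 b0; apply: dvdp_trans dvd.
    by apply: dvdp_mul => //; apply: dvdp_exp2l.
  have mk : (m %| k)%N by rewrite (prim_order_dvd pr) exprMn exprVn uvk mulfV // expf_neq0.
  have pk : (p %| k)%N by rewrite (dvdn_pcharf chp) k_char.
  have := dvdn_leq k0 (_ : m * p %| k)%N; rewrite Gauss_dvd ?mk ?pk // nE leqNgt kn.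
  by move/(_ isT).
- move=> a b c k a0 b0 c0 /andP [k1 _]; apply/negP => dvd.
  case/negP: (XsubC_exp3_Ndvdp_trinomial v0 a0 b0 c0 k1).
  by apply: dvdp_trans dvd; apply: dvdp_mull.
Qed.

Theorem proposition3p3 (p l : nat) (w : 'F_p) (r1 r2 r3 : nat) :
  prime p -> odd p ->
  (2 < l)%N -> (l %| p.-1)%N ->
  l.-primitive_root w ->
  (r1, r2, r3) \in [:: (1, 0, 3); (0, 3, 1); (0, 1, 3)]%N ->
  (r2 != 0%N -> odd l || (4 %| l)%N) ->
  MDS_pair_code (cyclic_code (code_len p l r2) (gen_poly w r1 r2 r3)) 6.
Proof.
(* l %| p.-1 is implied by the existence of w. *)
move=> pp po l2 _ wl r_in l_cond; have chp := pchar_Fp pp.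
have p2 : (2 < p)%N by rewrite ltn_neqAle prime_gt1 // andbT; apply: contraTneq po => <-.
have N1 : (-1 : 'F_p) != 1.
  rewrite eq_sym -addr_eq0 -[1 + 1 : 'F_p]/(2%:R) -(dvdn_pcharf chp).
  by apply/negP => /(dvdn_leq (ltn0Sn 1)); rewrite leqNgt p2.
set m := (if odd l then 2 * l else l)%N.
have m_gt1 : (1 < m)%N by rewrite /m; case: odd; lia.
have len r : r != 0%N -> code_len p l r = (m * p)%N.
  by rewrite /code_len /m => /negbTE ->; case: odd.
have wm : w ^+ m = 1.
  rewrite /m; case: odd; last exact: prim_expr_order.
  by rewrite mulnC exprM (prim_expr_order wl) expr1n.
have N1m : (-1) ^+ m = 1 :> 'F_p.
  by rewrite -signr_odd /m; case: ifP => [_ | /negbT/negbTE ->]; rewrite ?oddM.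
move: r_in l_cond; rewrite !inE => /or3P [] /eqP [-> -> ->] l_cond.
- have -> : gen_poly w 1 0 3 = ('X - 1%:P) * ('X - w%:P) ^+ 3.
    by rewrite /gen_poly polyC1 expr1 expr0 mulr1.
  apply: MDS_pair_code_XsubC_XsubC3 => //; first exact: ltnW.
    exact: expr1n.
  by rewrite div1r prim_rootV.
- have -> : gen_poly w 0 3 1 = ('X - w%:P) * ('X - (-1)%:P) ^+ 3.
    by rewrite /gen_poly polyCN opprK polyC1 expr0 mul1r expr1 mulrC.
  rewrite len //; apply: MDS_pair_code_XsubC_XsubC3 => //.
  by rewrite invrN1 mulrN1 prim_root_opp ?l_cond.
- have -> : gen_poly w 0 1 3 = ('X - (-1)%:P) * ('X - w%:P) ^+ 3.
    by rewrite /gen_poly polyCN opprK polyC1 expr0 mul1r expr1.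
  rewrite len //; apply: MDS_pair_code_XsubC_XsubC3 => //.
  by rewrite mulN1r prim_root_opp ?l_cond ?prim_rootV.
Qed.
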